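(* Let $\mathcal{LS}_{\mathfrak{A}_2}$ be the operad (variety) of left-symmetric algebras over a field of characteristic $0$ satisfying the identity $a(bc)+b(ac)+a(cb)+c(ab)+b(ca)+c(ba)=0$. Its Koszul dual operad $\mathcal{LS}_{\mathfrak{A}_2}^{(!)}$ is the operad of alternative algebras satisfying the identity $(ab)c=(ba)c$.
   Context: A left-symmetric algebra is an algebra whose associator $(a,b,c)=(ab)c-a(bc)$ satisfies $(a,b,c)=(b,a,c)$. An algebra is alternative if $(a,a,b)=0=(a,b,b)$. The Koszul dual of a binary quadratic operad is taken in the sense of Ginzburg–Kapranov; equivalently, $\mathcal{P}^{(!)}$ is the quadratic operad whose algebras $U$ are defined by exactly those degree-3 identities making $S\otimes U$, with product $(a\otimes u)(b\otimes v)=ab\otimes uv$, Lie-admissible for every $\mathcal{P}$-algebra $S$. *)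

From HB Require Import structures.
From mathcomp Require Import all_boot all_order all_algebra all_fingroup.
Set Implicit Arguments. Unset Strict Implicit. Unset Printing Implicit Defensive.
Import GRing.Theory.
Local Open Scope ring_scope.

(* Multilinear degree-3 nonassociative monomials in the variables x_0,x_1,x_2:
   (s, true)  stands for (x_{s 0} x_{s 1}) x_{s 2},
   (s, false) stands for x_{s 0} (x_{s 1} x_{s 2}).
   A degree-3 (multilinear, binary quadratic) identity is a K-linear
   combination of these 12 monomials, i.e. a function mon -> K. *)
Definition mon := ('S_3 * bool)%type.

Section Identities.
Variable K : fieldType.

Definition x0 : 'I_3 := inord 0.
Definition x1 : 'I_3 := inord 1.
Definition x2 : 'I_3 := inord 2.

Definition mono (b : bool) (i j k : 'I_3) : mon -> K :=
  fun m => if [&& m.2 == b, m.1 x0 == i, m.1 x1 == j & m.1 x2 == k]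
           then 1 else 0.
Definition Lm := mono true.
Definition Rm := mono false.

Definition addI (f g : mon -> K) : mon -> K := fun m => f m + g m.
Definition oppI (f : mon -> K) : mon -> K := fun m => - f m.
Definition subI f g := addI f (oppI g).

Definition assoc3 (i j k : 'I_3) := subI (Lm i j k) (Rm i j k).

(* substitution x_i |-> x_{t i} in an identity *)
Definition act (t : 'S_3) (g : mon -> K) : mon -> K :=
  fun m => g (m.1 * t^-1, m.2)%g.

Definition Sspan (gs : seq (mon -> K)) (f : mon -> K) : Prop :=
  exists c : nat -> 'S_3 -> K, forall m : mon,
    f m = \sum_(i < size gs) \sum_(t : 'S_3)
             c i t * act t (nth (fun _ => 0) gs i) m.

(* sign in the Jacobi expansion of S (x) U:
   J(a(x)u, b(x)v, c(x)w) = sum_s sgn s [ (..)..(x)(..).. - .(..)(x).(..) ] *)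
Definition eps (m : mon) : K :=
  (if m.2 then 1 else -1) * (-1) ^+ odd_perm m.1.

Definition pairing (f g : mon -> K) : K := \sum_(m : mon) eps m * f m * g m.

(* Koszul dual (Ginzburg-Kapranov), with sign convention fixed by
   Lie-admissibility of S (x) U: relations of P^(!) = orthogonal of R_P. *)
Definition koszul_dual_rel (R : (mon -> K) -> Prop) (f : mon -> K) : Prop :=
  forall g, R g -> pairing f g = 0.

Definition LS_id := subI (assoc3 x0 x1 x2) (assoc3 x1 x0 x2).
Definition A2_id :=
  addI (Rm x0 x1 x2) (addI (Rm x1 x0 x2) (addI (Rm x0 x2 x1)
   (addI (Rm x2 x0 x1) (addI (Rm x1 x2 x0) (Rm x2 x1 x0))))).
Definition LS_A2_rel := Sspan [:: LS_id; A2_id].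

(* alternative (linearized): (a,b,c)+(b,a,c) = 0, (a,b,c)+(a,c,b) = 0 *)
Definition altL_id := addI (assoc3 x0 x1 x2) (assoc3 x1 x0 x2).
Definition altR_id := addI (assoc3 x0 x1 x2) (assoc3 x0 x2 x1).
Definition lcomm_id := subI (Lm x0 x1 x2) (Lm x1 x0 x2).
Definition Alt_lcomm_rel := Sspan [:: altL_id; altR_id; lcomm_id].

End Identities.

(* Every translate of the three
   generators of Alt_lcomm pairs to zero with every translate of the two LS_A2
   generators, which gives one inclusion.  For the other, an integral
   certificate writes each monomial y as a combination of Alt_lcomm translates
   plus eps times an element of the LS_A2 span; pairing a dual element f with
   the latter part gives 0, which leaves f as a combination of Alt_lcomm
   translates.  Both facts are finite integer identities checked by
   computation. *)

From Pilot Require Import Defs.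
From mathcomp Require Import all_boot all_order all_algebra all_fingroup.
From mathcomp Require Import ring.
Set Implicit Arguments. Unset Strict Implicit. Unset Printing Implicit Defensive.
Import GRing.Theory.
Local Open Scope ring_scope.

Notation translate gs i t := (Defs.act t (nth (fun _ => 0) gs i)).

Section KoszulDuality.
Variable K : fieldType.

Lemma eps_mul_eps (m : mon) : eps K m * eps K m = 1.
Proof.
rewrite /eps mulrACA -[_ ^+ _ * _]expr2 sqrr_sign mulr1.
by case: m.2; rewrite ?mulrNN mulr1.
Qed.

Lemma eq_pairing (f1 f2 g1 g2 : mon -> K) :
  f1 =1 f2 -> g1 =1 g2 -> pairing f1 g1 = pairing f2 g2.
Proof. by move=> ef eg; apply: eq_bigr => m _; rewrite ef eg. Qed.

Lemma pairingC (f g : mon -> K) : pairing f g = pairing g f.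
Proof. by apply: eq_bigr => m _; rewrite mulrAC. Qed.

Lemma pairing_span_eq0 (gs : seq (mon -> K)) (c : nat -> 'S_3 -> K) (f g : mon -> K) :
  (forall m, f m = \sum_(i < size gs) \sum_(t : 'S_3) c i t * translate gs i t m) ->
  (forall (i : 'I_(size gs)) t, pairing (translate gs i t) g = 0) ->
  pairing f g = 0.
Proof.
move=> def_f orth_g; rewrite /pairing (eq_bigr (fun m =>
  \sum_(i < size gs) \sum_(t : 'S_3) c i t * (eps K m * translate gs i t m * g m))).
  rewrite exchange_big big1 // => i _; rewrite exchange_big big1 // => t _.
  by rewrite -mulr_sumr; have := orth_g i t; rewrite /pairing => ->; rewrite mulr0.
move=> m _; rewrite def_f mulr_sumr big_distrl; apply: eq_bigr => i _.
by rewrite mulr_sumr big_distrl; apply: eq_bigr => t _ /=; ring.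
Qed.

Lemma Sspan_sub_koszul_dual (gs hs : seq (mon -> K)) :
  (forall (i : 'I_(size gs)) (j : 'I_(size hs)) s t,
     pairing (translate gs i s) (translate hs j t) = 0) ->
  forall f, Sspan gs f -> koszul_dual_rel (Sspan hs) f.
Proof.
move=> orth f [c def_f] g [d def_g].
apply: (pairing_span_eq0 def_f) => i s; rewrite pairingC.
by apply: (pairing_span_eq0 def_g) => j t; rewrite pairingC.
Qed.

Lemma koszul_dual_sub_Sspan (R : (mon -> K) -> Prop) (gs : seq (mon -> K))
    (gamma : nat -> 'S_3 -> mon -> K) :
  (forall y, R (fun x => eps K x * ((x == y)%:R -
     \sum_(i < size gs) \sum_(t : 'S_3) gamma i t x * translate gs i t y))) ->
  forall f, koszul_dual_rel R f -> Sspan gs f.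
Proof.
move=> cert f dual_f; exists (fun i t => \sum_x f x * gamma i t x) => y.
pose S x := \sum_(i < size gs) \sum_(t : 'S_3) gamma i t x * translate gs i t y.
have : \sum_x f x * ((x == y)%:R - S x) = 0.
  rewrite -[RHS](dual_f _ (cert y)) /pairing; apply: eq_bigr => x _.
  by rewrite mulrACA eps_mul_eps mul1r.
rewrite /S; under eq_bigr do rewrite mulrBr.
rewrite sumrB (bigD1 y) //= eqxx mulr1 big1 => [|x /negbTE->]; last by rewrite mulr0.
rewrite addr0 => /eqP; rewrite subr_eq0 => /eqP ->.
under eq_bigr do rewrite mulr_sumr.
rewrite exchange_big; apply: eq_bigr => i _.
under eq_bigr do rewrite mulr_sumr.
rewrite exchange_big; apply: eq_bigr => t _.
by rewrite big_distrl; apply: eq_bigr => x _; rewrite /=; ring.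
Qed.

End KoszulDuality.

(* Permutations of 'I_3 do not reduce under [vm_compute], so the finite checks
   run on this encoding: the monomial (s, b) becomes ((s 0, s 1, s 2), b). *)
Definition triple := (nat * nat * nat)%type.
Definition word := (triple * bool)%type.

Definition triple_of_perm (s : 'S_3) : triple := (s x0 : nat, s x1 : nat, s x2 : nat).
Definition word_of_mon (m : mon) : word := (triple_of_perm m.1, m.2).

Lemma ord3P (i : 'I_3) : [\/ i = x0, i = x1 | i = x2].
Proof.
by case: i => -[|[|[|//]]] ?; [apply: Or31 | apply: Or32 | apply: Or33];
  apply: val_inj; rewrite /= inordK.
Qed.

Lemma triple_of_perm_inj : injective triple_of_perm.
Proof.
move=> s t [e0 e1 e2]; apply/permP => i.
by case: (ord3P i) => ->; apply: val_inj.
Qed.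

Lemma word_of_mon_inj : injective word_of_mon.
Proof.
move=> [s b] [t c] eq_st; have /= /triple_of_perm_inj -> := congr1 fst eq_st.
by have /= -> := congr1 snd eq_st.
Qed.

Definition S3_list : seq 'S_3 :=
  [:: 1; tperm x0 x1; tperm x0 x2; tperm x1 x2;
      tperm x0 x1 * tperm x1 x2; tperm x0 x1 * tperm x0 x2]%g.

Definition S3_triples : seq triple :=
  [:: (0, 1, 2); (1, 0, 2); (2, 1, 0); (0, 2, 1); (2, 0, 1); (1, 2, 0)]%N.

Definition odd3 (u : triple) : bool :=
  (u.1.2 < u.1.1)%N (+) (u.2 < u.1.1)%N (+) (u.2 < u.1.2)%N.

Lemma S3_list_table :
  [seq (triple_of_perm s, odd_perm s) | s <- S3_list] =
  [seq (u, odd3 u) | u <- S3_triples].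
Proof.
have v0 : x0 = 0%N :> nat by rewrite /x0 inordK.
have v1 : x1 = 1%N :> nat by rewrite /x1 inordK.
have v2 : x2 = 2%N :> nat by rewrite /x2 inordK.
have n01 : (x0 == x1) = false by rewrite -val_eqE /= v0 v1.
have n02 : (x0 == x2) = false by rewrite -val_eqE /= v0 v2.
have n12 : (x1 == x2) = false by rewrite -val_eqE /= v1 v2.
have n10 : (x1 == x0) = false by rewrite eq_sym.
have n20 : (x2 == x0) = false by rewrite eq_sym.
have n21 : (x2 == x1) = false by rewrite eq_sym.
rewrite /= /triple_of_perm odd_perm1 !odd_permM !odd_tperm !permM !perm1 !permE /=.
do 2!rewrite ?eqxx ?n01 ?n02 ?n12 ?n10 ?n20 ?n21 /=.
by rewrite v0 v1 v2.
Qed.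

Lemma map_triple_of_perm_S3 : map triple_of_perm S3_list = S3_triples.
Proof. by have /(congr1 (map fst)) := S3_list_table; rewrite -!map_comp. Qed.

Lemma uniq_S3_list : uniq S3_list.
Proof. by apply: (@map_uniq _ _ triple_of_perm); rewrite map_triple_of_perm_S3. Qed.

Lemma mem_S3_list (s : 'S_3) : s \in S3_list.
Proof.
have size_S3 : (size (enum 'S_3) <= size S3_list)%N by rewrite -cardT card_Sn.
have [_ /(_ s) ->] := uniq_min_size uniq_S3_list (fun s _ => mem_enum _ s) size_S3.
exact: mem_enum.
Qed.

Lemma triple_of_perm_mem (s : 'S_3) : triple_of_perm s \in S3_triples.
Proof. by rewrite -map_triple_of_perm_S3 map_f ?mem_S3_list. Qed.

Lemma odd_perm_triple (s : 'S_3) : odd_perm s = odd3 (triple_of_perm s).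
Proof.
have /mapP[u _ [eq_u ->]] : (triple_of_perm s, odd_perm s) \in
    [seq (u, odd3 u) | u <- S3_triples].
  by rewrite -S3_list_table map_f ?mem_S3_list.
by rewrite eq_u.
Qed.

Lemma big_S3 (V : nmodType) (F : 'S_3 -> V) :
  \sum_(s : 'S_3) F s = \sum_(s <- S3_list) F s.
Proof.
rewrite -big_enum; apply/perm_big/uniq_perm; rewrite ?enum_uniq ?uniq_S3_list //.
by move=> s; rewrite mem_enum mem_S3_list.
Qed.

Lemma big_S3_triple (V : nmodType) (F : triple -> V) :
  \sum_(s : 'S_3) F (triple_of_perm s) = \sum_(u <- S3_triples) F u.
Proof. by rewrite big_S3 -map_triple_of_perm_S3 big_map. Qed.

Definition words : seq word :=
  [seq (u, b) | u <- S3_triples, b <- [:: true; false]].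

Lemma big_mon_word (V : nmodType) (F : word -> V) :
  \sum_(m : mon) F (word_of_mon m) = \sum_(w <- words) F w.
Proof.
rewrite -(pair_big xpredT xpredT (fun s b => F (triple_of_perm s, b))).
rewrite (big_S3_triple (fun u => \sum_(b : bool) F (u, b))).
rewrite big_allpairs; apply: eq_bigr => u _.
by rewrite big_bool big_cons big_seq1.
Qed.

Lemma mem_words (m : mon) : word_of_mon m \in words.
Proof. by apply: allpairs_f; rewrite ?triple_of_perm_mem //; case: m.2. Qed.

Definition monoZ (b : bool) (i j k : nat) (w : word) : int :=
  if w == ((i, j, k), b) then 1 else 0.
Definition assocZ i j k := monoZ true i j k \- monoZ false i j k.

Definition LS_idZ (u : triple) : word -> int :=
  let: (a, b, c) := u in assocZ a b c \- assocZ b a c.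
Definition A2_idZ (u : triple) : word -> int :=
  let: (a, b, c) := u in
  monoZ false a b c \+ (monoZ false b a c \+ (monoZ false a c b \+
  (monoZ false c a b \+ (monoZ false b c a \+ monoZ false c b a)))).
Definition altL_idZ (u : triple) : word -> int :=
  let: (a, b, c) := u in assocZ a b c \+ assocZ b a c.
Definition altR_idZ (u : triple) : word -> int :=
  let: (a, b, c) := u in assocZ a b c \+ assocZ a c b.
Definition lcomm_idZ (u : triple) : word -> int :=
  let: (a, b, c) := u in monoZ true a b c \- monoZ true b a c.

Definition LS_A2_gensZ := [:: LS_idZ; A2_idZ].
Definition Alt_lcomm_gensZ := [:: altL_idZ; altR_idZ; lcomm_idZ].

Definition epsZ (w : word) : int := (if w.2 then 1 else -1) * (-1) ^+ odd3 w.1.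
Definition pairingZ (a c : word -> int) : int :=
  \sum_(w <- words) epsZ w * a w * c w.

Section Transfer.
Variable K : fieldType.

Definition zlift (a : word -> int) : mon -> K := fun m => (a (word_of_mon m))%:~R.

Lemma mono_actE (t : 'S_3) b (i j k : 'I_3) (m : mon) :
  mono K b i j k (m.1 * t^-1, m.2)%g = zlift (monoZ b (t i) (t j) (t k)) m.
Proof.
rewrite /mono /zlift /monoZ /word_of_mon /triple_of_perm /= !permM.
rewrite !(canF_eq (permKV t)) !xpair_eqE -!val_eqE /= andbC !andbA.
by case: ifP.
Qed.

Lemma LS_A2_gen_zlift (i : 'I_2) (t : 'S_3) :
  translate [:: LS_id K; A2_id K] i t
  =1 zlift (nth (fun _ _ => 0) LS_A2_gensZ i (triple_of_perm t)).
Proof.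
move=> m; case: i => -[|[|//]] _ /=;
  unfold Defs.act, LS_id, A2_id, assoc3, assocZ, subI, addI, oppI, Lm, Rm;
  by rewrite !mono_actE /zlift /= !(intrD, intrN).
Qed.

Lemma Alt_lcomm_gen_zlift (i : 'I_3) (t : 'S_3) :
  translate [:: altL_id K; altR_id K; lcomm_id K] i t
  =1 zlift (nth (fun _ _ => 0) Alt_lcomm_gensZ i (triple_of_perm t)).
Proof.
move=> m; case: i => -[|[|[|//]]] _ /=;
  unfold Defs.act, altL_id, altR_id, lcomm_id, assoc3, assocZ, subI, addI, oppI, Lm, Rm;
  by rewrite !mono_actE /zlift /= !(intrD, intrN).
Qed.

Lemma eps_word (m : mon) : eps K m = (epsZ (word_of_mon m))%:~R.
Proof.
rewrite /eps /epsZ /= -odd_perm_triple intrM.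
by case: m.2; case: odd_perm; rewrite /= ?(intrN, expr1, expr0).
Qed.

Lemma pairing_zlift (a c : word -> int) :
  pairing (zlift a) (zlift c) = (pairingZ a c)%:~R.
Proof.
rewrite /pairing /pairingZ rmorph_sum.
rewrite -(big_mon_word (fun w => (epsZ w * a w * c w)%:~R)); apply: eq_bigr => m _.
by rewrite eps_word /zlift !intrM.
Qed.

Lemma sum_translate_zlift n (T : 'I_n -> 'S_3 -> mon -> K)
    (Tz : nat -> triple -> word -> int) :
    (forall (i : 'I_n) t, T i t =1 zlift (Tz i (triple_of_perm t))) ->
  forall (c : nat -> triple -> int) (m : mon),
  \sum_(i < n) \sum_(t : 'S_3) (c i (triple_of_perm t))%:~R * T i t m =
  (\sum_(0 <= i < n) \sum_(u <- S3_triples) c i u * Tz i u (word_of_mon m))%:~R.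
Proof.
move=> eq_T c m; rewrite rmorph_sum big_mkord; apply: eq_bigr => i _.
rewrite rmorph_sum -big_S3_triple; apply: eq_bigr => t _.
by rewrite eq_T rmorphM.
Qed.

End Transfer.

Definition lookup (T : eqType) (tab : seq (T * int)) (k : T) : int :=
  nth 0 (unzip2 tab) (index k (unzip1 tab)).

(* Only nonzero entries are listed: [lookup] returns 0 on a missing key. *)
Definition Alt_coeffs : seq (nat * triple * word * int) := [::
  (0, (0, 1, 2), ((0, 1, 2), false), (-1)%Z); (0, (0, 1, 2), ((0, 2, 1), true), 1%Z);
  (0, (0, 1, 2), ((0, 2, 1), false), 2%Z); (0, (0, 1, 2), ((2, 0, 1), true), 1%Z);
  (0, (2, 1, 0), ((2, 1, 0), false), (-1)%Z); (0, (0, 2, 1), ((0, 2, 1), true), 1%Z);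
  (0, (0, 2, 1), ((0, 2, 1), false), 1%Z); (0, (0, 2, 1), ((2, 0, 1), true), 1%Z);
  (1, (0, 1, 2), ((0, 2, 1), true), (-1)%Z); (1, (0, 1, 2), ((0, 2, 1), false), (-2)%Z);
  (1, (0, 1, 2), ((2, 0, 1), true), (-1)%Z); (1, (1, 0, 2), ((0, 1, 2), true), 1%Z);
  (1, (1, 0, 2), ((0, 1, 2), false), 2%Z); (1, (1, 0, 2), ((1, 0, 2), true), 1%Z);
  (1, (1, 0, 2), ((0, 2, 1), true), (-1)%Z); (1, (1, 0, 2), ((0, 2, 1), false), (-2)%Z);
  (1, (1, 0, 2), ((2, 0, 1), true), (-1)%Z); (2, (0, 1, 2), ((0, 1, 2), true), 1%Z);
  (2, (0, 1, 2), ((0, 1, 2), false), 1%Z); (2, (2, 1, 0), ((2, 1, 0), true), 1%Z);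
  (2, (2, 1, 0), ((2, 1, 0), false), 1%Z); (2, (0, 2, 1), ((0, 2, 1), true), 1%Z);
  (2, (0, 2, 1), ((0, 2, 1), false), 1%Z)]%N.

Definition LS_coeffs : seq (word * nat * triple * int) := [::
  (((1, 0, 2), false), 0, (0, 1, 2), 1%Z); (((2, 0, 1), false), 0, (0, 2, 1), (-1)%Z);
  (((1, 2, 0), true), 0, (0, 1, 2), (-1)%Z); (((1, 2, 0), true), 0, (2, 1, 0), (-1)%Z);
  (((1, 2, 0), true), 0, (0, 2, 1), (-1)%Z); (((1, 2, 0), true), 1, (0, 1, 2), 1%Z);
  (((1, 2, 0), false), 0, (0, 1, 2), 1%Z); (((1, 2, 0), false), 0, (0, 2, 1), 1%Z);
  (((1, 2, 0), false), 1, (0, 1, 2), (-1)%Z)]%N.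

Definition gammaZ (x : word) (i : nat) (u : triple) : int := lookup Alt_coeffs (i, u, x).
Definition muZ (y : word) (l : nat) (u : triple) : int := lookup LS_coeffs (y, l, u).

Lemma LS_A2_certificateZ : all (fun x => all (fun y =>
    epsZ x * ((x == y)%:R - \sum_(0 <= i < 3) \sum_(u <- S3_triples)
                 gammaZ x i u * nth (fun _ _ => 0) Alt_lcomm_gensZ i u y)
    == \sum_(0 <= l < 2) \sum_(u <- S3_triples)
                 muZ y l u * nth (fun _ _ => 0) LS_A2_gensZ l u x) words) words.
Proof. by rewrite unlock; vm_compute. Qed.

Lemma Alt_lcomm_LS_A2_orthogonalZ :
  all (fun u => all (fun v => all (fun i => all (fun j =>
    pairingZ (nth (fun _ _ => 0) Alt_lcomm_gensZ i u)
             (nth (fun _ _ => 0) LS_A2_gensZ j v) == 0)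
  (iota 0 2)) (iota 0 3)) S3_triples) S3_triples.
Proof. by rewrite /pairingZ unlock; vm_compute. Qed.

Definition Alt_lcomm_coord (K : fieldType) (i : nat) (t : 'S_3) (x : mon) : K :=
  (gammaZ (word_of_mon x) i (triple_of_perm t))%:~R.

Lemma LS_A2_certificate (K : fieldType) (y : mon) :
  LS_A2_rel (fun x => eps K x * ((x == y)%:R - \sum_(i < 3) \sum_(t : 'S_3)
     Alt_lcomm_coord K i t x * translate [:: altL_id K; altR_id K; lcomm_id K] i t y)).
Proof.
exists (fun l u => (muZ (word_of_mon y) l (triple_of_perm u))%:~R) => x.
rewrite /Alt_lcomm_coord eps_word.
rewrite (sum_translate_zlift (@Alt_lcomm_gen_zlift K) (gammaZ (word_of_mon x))).
rewrite (sum_translate_zlift (@LS_A2_gen_zlift K) (muZ (word_of_mon y))).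
have -> : (x == y)%:R = ((word_of_mon x == word_of_mon y)%:R : int)%:~R :> K.
  by rewrite (inj_eq word_of_mon_inj); case: (x == y).
rewrite -intrB -intrM.
by have /allP/(_ _ (mem_words x))/allP/(_ _ (mem_words y))/eqP-> := LS_A2_certificateZ.
Qed.

Lemma Alt_lcomm_LS_A2_orthogonal (K : fieldType) (i : 'I_3) (j : 'I_2) (s t : 'S_3) :
  pairing (translate [:: altL_id K; altR_id K; lcomm_id K] i s)
          (translate [:: LS_id K; A2_id K] j t) = 0.
Proof.
rewrite (eq_pairing (@Alt_lcomm_gen_zlift K i s) (@LS_A2_gen_zlift K j t)) pairing_zlift.
have i_iota : nat_of_ord i \in iota 0 3 by rewrite mem_iota ltn_ord.
have j_iota : nat_of_ord j \in iota 0 2 by rewrite mem_iota ltn_ord.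
have := Alt_lcomm_LS_A2_orthogonalZ.
move=> /allP/(_ _ (triple_of_perm_mem s))/allP/(_ _ (triple_of_perm_mem t)).
by move=> /allP/(_ _ i_iota)/allP/(_ _ j_iota)/eqP->.
Qed.

Theorem mainTheorem5 (K : fieldType) (charK0 : [pchar K] =i pred0)
  (f : mon -> K) :
  koszul_dual_rel (@LS_A2_rel K) f <-> Alt_lcomm_rel f.
Proof.
split=> [dual_f | span_f].
- by apply: koszul_dual_sub_Sspan dual_f => y; apply: LS_A2_certificate.
- by apply: Sspan_sub_koszul_dual span_f => i j s t; apply: Alt_lcomm_LS_A2_orthogonal.
Qed.
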